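(* Let $G$ be a finite abelian group. If $B\subset G$ is an irreducible balanced set, then $|B|\geqslant\log_2(\mathrm{minspan}(B))+1$.
   Context: A set $B\subset G$ is balanced if for every $b\in B$ there exist distinct $b_1,b_2\in B$ with $2b=b_1+b_2$. A balanced set $B$ is irreducible if it does not contain two disjoint balanced subsets. For $C\subset G$, $\mathrm{minspan}(C)=\min_{g\in G}|\langle C+g\rangle|$, where $\langle X\rangle$ is the subgroup generated by $X$. *)

From mathcomp Require Import all_boot all_fingroup.
From Stdlib Require Import Reals.
Set Implicit Arguments. Unset Strict Implicit. Unset Printing Implicit Defensive.
Import GroupScope.

(* The finite abelian group G is the whole finGroupType gT (with abelian
   [set: gT]); the group law is written multiplicatively, so "2b" is b ^+ 2
   and "b1 + b2" is b1 * b2. *)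

Definition balanced (gT : finGroupType) (B : {set gT}) : Prop :=
  B != set0 /\
  forall b, b \in B -> exists b1 b2, [/\ b1 \in B, b2 \in B, b1 != b2 & b ^+ 2 = b1 * b2].

Definition irreducible_balanced (gT : finGroupType) (B : {set gT}) : Prop :=
  balanced B /\
  ~ (exists B1 B2 : {set gT}, [/\ B1 \subset B, B2 \subset B, [disjoint B1 & B2],
                               balanced B1 & balanced B2]).

Definition minspan (gT : finGroupType) (C : {set gT}) : nat :=
  \big[minn/#|gT|]_(g : gT) #|<< C :* g >>|.

From HB Require Import structures.
From mathcomp Require Import all_boot all_fingroup zify.
Import GroupScope.
Set Implicit Arguments. Unset Strict Implicit. Unset Printing Implicit Defensive.

(* Fix, for every b in B, a witness pair b ^+ 2 = f1 b * f2 b.  Nonempty subsets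
   of B closed under f1 and f2 are balanced, so by irreducibility any two of them
   meet, and a minimal one yields a point x0 lying in all of them.  Growing {x0}
   by the b whose f1 b or f2 b is already present exhausts B (what is never
   reached is closed), and w b := 2 ^ (#|T| - depth b) satisfies
   2 w b < w (f1 b) + w (f2 b) for b != x0.  Put y b := b * x0^-1, so y x0 = 1
   and y b ^+ 2 = y (f1 b) * y (f2 b).  In any product of y b's, b in B, a
   repeated factor y b ^+ 2 can be replaced by y (f1 b) * y (f2 b); this raises
   the total weight, which is bounded, so every such product equals a product of
   distinct y b with b != x0.  These at most 2 ^ (#|B| - 1) subset products thus
   form a group containing B :* x0^-1. *)

Section ClosedSubsets.

Variables (T : finType) (f1 f2 : T -> T).

Definition closed2 (S : {set T}) := [forall b in S, (f1 b \in S) && (f2 b \in S)].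

Lemma closed2P (S : {set T}) : reflect {in S, forall b, f1 b \in S /\ f2 b \in S} (closed2 S).
Proof. by apply: (iffP forall_inP) => clS b /clS; [case/andP | case=> -> ->]. Qed.

Variable B : {set T}.

Definition closed_subset (S : {set T}) := [&& S != set0, S \subset B & closed2 S].

Lemma closed_subsetI (S1 S2 : {set T}) :
  closed_subset S1 -> closed_subset S2 -> S1 :&: S2 != set0 ->
  closed_subset (S1 :&: S2).
Proof.
case/and3P=> _ S1B /closed2P cl1 /and3P[_ _ /closed2P cl2] nz12.
rewrite /closed_subset nz12 (subset_trans (subsetIl _ _) S1B) /=.
apply/closed2P=> b /setIP[/cl1[? ?] /cl2[? ?]]; by rewrite !inE; split; apply/andP.
Qed.

Hypothesis closed_subsets_meet :
  forall S1 S2, closed_subset S1 -> closed_subset S2 -> S1 :&: S2 != set0.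

Lemma common_point :
  closed_subset B -> exists2 x0, x0 \in B & forall S, closed_subset S -> x0 \in S.
Proof.
move=> clB; have [S0 /minsetP[clS0 minS0] _] := minset_exists clB.
have /and3P[/set0Pn[x0 x0S0] S0B _] := clS0.
exists x0 => [|S clS]; first exact: subsetP x0S0.
have clS0S := closed_subsetI clS0 clS (closed_subsets_meet clS0 clS).
by rewrite -(minS0 _ clS0S (subsetIl _ _)) inE in x0S0; case/andP: x0S0.
Qed.

Variable x0 : T.
Hypothesis x0_common : forall S, closed_subset S -> x0 \in S.

Definition grow (X : {set T}) := [set b in B | [|| b == x0, f1 b \in X | f2 b \in X]].

Lemma grow_mono : {homo grow : X Y / X \subset Y}.
Proof.
move=> X Y /subsetP sXY; apply/subsetP=> b; rewrite !inE => /andP[-> /or3P[]] /=.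
- by move->.
- by move/sXY->; rewrite orbT.
- by move/sXY->; rewrite !orbT.
Qed.

Local Notation depth := (fix_order grow).

Hypothesis closedB : closed2 B.

Lemma sub_fixset_grow : B \subset fixset grow.
Proof.
move/closed2P: closedB => clB; rewrite -setD_eq0; apply: contraT => nz.
have: x0 \in B :\: fixset grow.
  apply: x0_common; rewrite /closed_subset nz subsetDl /=.
  apply/closed2P=> b /setDP[bB bNfix]; have [f1B f2B] := clB b bB.
  rewrite !inE f1B f2B !andbT; split; apply: contra bNfix => fix_fb;
    by rewrite -(fixsetK grow_mono) inE bB fix_fb !orbT.
by rewrite inE -{1}(fixsetK grow_mono) inE eqxx andbT => /andP[/negP].
Qed.

Lemma depth_descent b :
  b \in B -> b != x0 -> (depth (f1 b) < depth b) || (depth (f2 b) < depth b).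
Proof.
move=> bB bx0; have := in_iter_fix_orderE grow b.
rewrite (subsetP sub_fixset_grow b bB); case: (depth b) => [|k] /=; first by rewrite inE.
rewrite inE (negbTE bx0) /= => /andP[_ /orP[] /(fix_order_small grow_mono) le];
  by rewrite !ltnS le ?orbT.
Qed.

Definition weight b := (2 ^ (#|T| - depth b))%N.

Lemma weight_split b : b \in B -> b != x0 -> 2 * weight b < weight (f1 b) + weight (f2 b).
Proof.
move=> bB bx0; have depth_le := fix_order_le_max grow b.
have dbl c : depth c < depth b -> 2 * weight b <= weight c.
  by move=> lt_cb; rewrite /weight -expnS leq_pexp2l //; lia.
have pos c : 0 < weight c by rewrite expn_gt0.
by case/orP: (depth_descent bB bx0) => /dbl; have := pos (f1 b); have := pos (f2 b); lia.
Qed.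

End ClosedSubsets.

Lemma perm_eq_rem2 (T : eqType) (s : seq T) b :
  1 < count_mem b s -> perm_eq s [:: b, b & rem b (rem b s)].
Proof.
move=> dup_b; have b_s : b \in s by rewrite -has_pred1 has_count; lia.
have b_rem : b \in rem b s by rewrite -has_pred1 has_count count_mem_rem eqxx; lia.
by apply: perm_trans (perm_to_rem b_s) _; rewrite perm_cons perm_to_rem.
Qed.

Lemma uniq_filter_count (T : eqType) (p : pred T) (s : seq T) :
  (forall b, p b -> count_mem b s <= 1) -> uniq (filter p s).
Proof.
elim: s => //= a s IH le1.
have le1s b : p b -> count_mem b s <= 1 by move/le1 => /=; lia.
case: ifP => pa; rewrite /= IH // andbT mem_filter pa /=.
by apply/count_memPn; have := le1 a pa; rewrite /= eqxx; lia.
Qed.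

Section SubsetProducts.

Variables (I : finType) (gT : finGroupType).
Hypothesis mulgC : forall x y : gT, x * y = y * x.
HB.instance Definition _ := SemiGroup.isCommutativeLaw.Build gT *%g mulgC.

Variables (B : {set I}) (x0 : I) (f1 f2 : I -> I) (y : I -> gT) (w : I -> nat).
Hypothesis closedB : closed2 f1 f2 B.
Hypothesis y_x0 : y x0 = 1.
Hypothesis y_split : {in B, forall b, y b ^+ 2 = y (f1 b) * y (f2 b)}.
Hypothesis w_split : {in B, forall b, b != x0 -> (2 * w b < w (f1 b) + w (f2 b))%N}.

Definition subset_prods := [set \prod_(b in S) y b | S : {set I} in powerset (B :\ x0)].

Lemma prod_simple_seq_subset_prods s :
  {subset s <= B} -> (forall b, b != x0 -> count_mem b s <= 1) ->
  \prod_(b <- s) y b \in subset_prods.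
Proof.
move=> sB simple_s; apply/imsetP; exists [set b in s | b != x0].
  by rewrite powersetE; apply/subsetP=> b; rewrite !inE => /andP[/sB -> ->].
have -> : \prod_(b <- s) y b = \prod_(b <- s | b != x0) y b.
  by rewrite [RHS]big_rmcond_in // => b _; rewrite negbK => /eqP->.
rewrite -big_filter big_uniq; last exact: uniq_filter_count.
by apply: eq_bigl => b; rewrite !inE mem_filter andbC.
Qed.

Lemma prod_seq_subset_prods s : {subset s <= B} -> \prod_(b <- s) y b \in subset_prods.
Proof.
pose V := \max_(b in B) w b.
have sum_le r : {subset r <= B} -> (\sum_(c <- r) w c <= size r * V)%N.
  elim: r => [|c r IHr] rB; first by rewrite big_nil.
  rewrite big_cons mulSn leq_add //; first by apply: leq_bigmax_cond; rewrite rB ?mem_head.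
  by apply: IHr => d dr; rewrite rB // inE dr orbT.
(* Splitting a repeated [b] keeps the product and the length and raises the
   total weight, which stays below [size s * V]. *)
move=> sB; have [n] := ubnP (size s * V - \sum_(b <- s) w b)%N.
elim: n s sB => // n IH s sB lt_n.
case: (pickP [pred b | (b != x0) && (1 < count_mem b s)%N]) => [b | simple_s]; last first.
  apply: prod_simple_seq_subset_prods => // b bx0.
  by have := simple_s b; rewrite /= bx0 /= => /negbT; rewrite -leqNgt.
case/andP=> bx0 dup_b; have perm_s := perm_eq_rem2 dup_b.
set r := rem b (rem b s) in perm_s.
have [bB rB] : b \in B /\ {subset r <= B}.
  by split=> [|c cr]; apply: sB; rewrite (perm_mem perm_s) !inE ?eqxx ?cr ?orbT.
have /closed2P/(_ b bB)[f1B f2B] := closedB.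
have s'B : {subset [:: f1 b, f2 b & r] <= B}.
  by move=> c; rewrite !inE => /or3P[/eqP-> | /eqP-> | /rB].
have -> : \prod_(c <- s) y c = \prod_(c <- [:: f1 b, f2 b & r]) y c.
  by rewrite (perm_big _ perm_s) /= !big_cons !mulgA -[y b * y b]/(y b ^+ 2) y_split.
apply: IH => //; have := sum_le _ s'B; have := w_split bB bx0.
by rewrite (perm_size perm_s) (perm_big _ perm_s) !big_cons /= in lt_n *; lia.
Qed.

Lemma group_set_subset_prods : group_set subset_prods.
Proof.
have subB S : S \in powerset (B :\ x0) -> {subset S <= B}.
  by rewrite powersetE => /subsetP sS b /sS /setD1P[].
apply/group_setP; split; first by have := @prod_seq_subset_prods [::]; rewrite big_nil; apply.
move=> _ _ /imsetP[S1 /subB S1B ->] /imsetP[S2 /subB S2B ->].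
rewrite -!big_enum /= -big_cat prod_seq_subset_prods // => b.
by rewrite mem_cat !mem_enum => /orP[/S1B | /S2B].
Qed.

Lemma card_gen_subset_prods : (#|<<y @: B>>| <= 2 ^ #|B :\ x0|)%N.
Proof.
have sub : <<y @: B>> \subset Group group_set_subset_prods.
  rewrite gen_subG; apply/subsetP=> _ /imsetP[b bB ->].
  have := @prod_seq_subset_prods [:: b]; rewrite big_seq1; apply=> c.
  by rewrite inE => /eqP->.
by rewrite (leq_trans (subset_leq_card sub)) // -card_powerset leq_imset_card.
Qed.

End SubsetProducts.

Lemma minspan_le (gT : finGroupType) (C : {set gT}) g : (minspan C <= #|<<C :* g>>|)%N.
Proof.
rewrite /minspan; have : g \in index_enum gT by rewrite mem_index_enum.
elim: (index_enum gT) => //= h r IHr; rewrite big_cons inE => /predU1P[<- | /IHr].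
  exact: geq_minl.
exact: leq_trans (geq_minr _ _).
Qed.

Lemma minspan_gt0 (gT : finGroupType) (C : {set gT}) : (0 < minspan C)%N.
Proof.
apply: (big_ind (fun k => 0 < k)%N) => [|a b a_gt0 b_gt0 | g _].
- by apply/card_gt0P; exists 1.
- by rewrite leq_min a_gt0 b_gt0.
- exact: cardG_gt0.
Qed.

Section BalancedSets.

Variables (gT : finGroupType) (B : {set gT}).

Definition balancing_witnesses (f1 f2 : gT -> gT) :=
  {in B, forall b, [/\ f1 b \in B, f2 b \in B, f1 b != f2 b & b ^+ 2 = f1 b * f2 b]}.

Lemma balanced_witnesses : balanced B -> exists f1 f2, balancing_witnesses f1 f2.
Proof.
case=> _ balB.
have /fin_all_exists[f fP] : forall b, exists p : gT * gT, b \in B ->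
    [/\ p.1 \in B, p.2 \in B, p.1 != p.2 & b ^+ 2 = p.1 * p.2].
  move=> b; have [/balB[b1 [b2 wit]] | _] := boolP (b \in B).
    by exists (b1, b2).
  by exists (b, b).
by exists (fun b => (f b).1), (fun b => (f b).2).
Qed.

Lemma closed_subset_balanced f1 f2 S :
  balancing_witnesses f1 f2 -> closed_subset f1 f2 B S -> balanced S.
Proof.
move=> wit /and3P[nzS /subsetP SB /closed2P clS]; split=> // b bS.
have [f1S f2S] := clS b bS; have [_ _ ne e] := wit b (SB b bS).
by exists (f1 b), (f2 b).
Qed.

Lemma minspan_le_pow2 :
  abelian [set: gT] -> irreducible_balanced B -> (minspan B <= 2 ^ #|B|.-1)%N.
Proof.
move=> abG [balB irrB]; have [nzB _] := balB.
have mulgC (x z : gT) : x * z = z * x by apply: (centsP abG); rewrite inE.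
have [f1 [f2 wit]] := balanced_witnesses balB.
have closedB : closed2 f1 f2 B by apply/closed2P=> b /wit[].
have closed_meet S1 S2 :
    closed_subset f1 f2 B S1 -> closed_subset f1 f2 B S2 -> S1 :&: S2 != set0.
  move=> clS1 clS2; rewrite setI_eq0; apply/negP=> disj; apply: irrB; exists S1, S2.
  have [/and3P[_ S1B _] /and3P[_ S2B _]] := (clS1, clS2).
  by split; try exact: closed_subset_balanced wit _.
have clB : closed_subset f1 f2 B B by rewrite /closed_subset nzB subxx closedB.
have [x0 x0B x0_common] := common_point closed_meet clB.
have y_split : {in B, forall b, (b * x0^-1) ^+ 2 = f1 b * x0^-1 * (f2 b * x0^-1)}.
  move=> b /wit[_ _ _ e]; rewrite expgMn ?e; last exact: mulgC.
  by rewrite !mulgA; congr (_ * _); rewrite -!mulgA (mulgC (f2 b)).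
have w_split := weight_split x0_common closedB.
rewrite (leq_trans (minspan_le B x0^-1)) // -rcosetE (cardsD1 x0 B) x0B.
exact: (card_gen_subset_prods (y := fun b => b * x0^-1)
          mulgC closedB (mulgV x0) y_split w_split).
Qed.

End BalancedSets.

(* Imported only here: Stdlib rebinds [^] in [nat_scope] to [Nat.pow], which is
   not convertible to ssrnat's [expn] on open terms. *)
From Stdlib Require Import Reals Lra.

Lemma ln_le_pow2 (m n : nat) :
  (0 < m)%nat -> (m <= expn 2 n)%nat -> (ln (INR m) / ln 2 <= INR n)%R.
Proof.
move=> /ltP m_gt0 /leP le_m.
have ln2_gt0 : (0 < ln 2)%R by have := ln_lt_2; lra.
apply: (Rmult_le_reg_r (ln 2)) => //.
rewrite /Rdiv Rmult_assoc Rinv_l ?Rmult_1_r -?ln_pow; try lra.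
have INR_pow2 : INR (expn 2 n) = (2 ^ n)%R.
  elim: (n) => [|k IH]; first by [].
  by rewrite expnS mult_INR IH.
have {}le_m : (INR m <= 2 ^ n)%R by rewrite -INR_pow2; apply: le_INR.
case: (Rle_lt_or_eq_dec _ _ le_m) => [lt_m | ->]; last lra.
by apply/Rlt_le/ln_increasing => //; apply: lt_0_INR.
Qed.

Theorem corollary4p7 (gT : finGroupType) (B : {set gT}) :
  abelian [set: gT] -> irreducible_balanced B ->
  (ln (INR (minspan B)) / ln 2 + 1 <= INR #|B|)%R.
Proof.
move=> abG irrB.
have B_gt0 : (0 < #|B|)%nat by case: irrB => [[nzB _] _]; rewrite card_gt0.
rewrite -(prednK B_gt0) S_INR; apply: Rplus_le_compat_r.
exact: ln_le_pow2 (minspan_gt0 B) (minspan_le_pow2 abG irrB).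
Qed.
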